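(* Let $\mathcal S$ be a trajectory set. The following are equivalent: (1) $\bar\sigma(0)\ge 0$. (2) (LOP) holds, the hedging price functional $I$ is positive (i.e. $I(f)\ge0$ for every $f\in\mathcal E^+$), and $I(f)\le\bar I(f^+)$ for every $f\in\mathcal E$. Moreover, if one (and then both) of these conditions holds, then $\bar\sigma(f)=I(f)$ for every $f\in\mathcal E$ and $\bar I(f)=I(f)$ for every $f\in\mathcal E^+$.
   Context: Fix $s_0\in\mathbb R$. A trajectory set is any set $\mathcal S$ of real sequences $S=(S_j)_{j\in\mathbb N_0}$ with $S_0=s_0$. A simple portfolio $(V,n,H)$ consists of $V\in\mathbb R$, $n\in\mathbb N$ and functions $H_i:\mathcal S\to\mathbb R$, $0\le i\le n-1$, which are nonanticipating, i.e. $H_i(S)=h_i(S_0,\dots,S_i)$ for some (not necessarily measurable) $h_i:\mathbb R^{i+1}\to\mathbb R$. Its wealth process is $\Pi^{V,n,H}_j(S)=V+\sum_{i=0}^{\min\{j,n\}-1}H_i(S)(S_{i+1}-S_i)$, $j\in\mathbb N_0$, and $\Pi^{V,n,H}_\infty:=\Pi^{V,n,H}_n$. It is positive if $V\ge0$ and $\Pi^{V,n,H}_\infty\ge0$ on $\mathcal S$. A generalized portfolio is a sequence $(V_m,n_m,H_m)_{m\in\mathbb N_0}$ of simple portfolios with $(V_m,n_m,H_m)$ positive for every $m\ge1$; it is a positive generalized portfolio if moreover $\Pi^{V_0,n_0,H_0}_j\equiv0$ for all $j$. A financial position $f:\mathcal S\to[-\infty,+\infty]$ is superhedged by a generalized portfolio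 with initial endowment $V\in(-\infty,+\infty]$ if $f\le\sum_{m=0}^\infty\Pi^{V_m,n_m,H_m}_\infty$ pointwise on $\mathcal S$ and $V=\sum_{m=0}^\infty V_m$. For $f:\mathcal S\to[0,+\infty]$, $\bar I(f)$ is the infimum of all $V\in[0,+\infty]$ such that $f$ is superhedged by a positive generalized portfolio with initial endowment $V$; for any financial position $f$, $\bar\sigma(f)$ is the infimum of all $V\in(-\infty,+\infty]$ such that $f$ is superhedged by a generalized portfolio with initial endowment $V$. Let $\mathcal E=\{\Pi^{V,n,H}_\infty:(V,n,H)\text{ simple portfolio}\}$ and $\mathcal E^+=\{f\in\mathcal E: f\ge0 \text{ on }\mathcal S\}$. (LOP) is the condition: whenever two simple portfolios $(V_0,n_0,H_0)$, $(V_1,n_1,H_1)$ satisfy $\Pi^{V_1,n_1,H_1}_\infty(S)=\Pi^{V_0,n_0,H_0}_\infty(S)$ for all $S\in\mathcal S$, then $V_1=V_0$. Under (LOP), the hedging price functional $I:\mathcal E\to\mathbb R$, $I(\Pi^{V,n,H}_\infty)=V$, is well defined and linear. $f^+,f^-$ denote positive and negative parts. *)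

From HB Require Import structures.
From mathcomp Require Import all_boot all_order all_algebra.
From mathcomp Require Import all_classical all_reals all_analysis.
Set Implicit Arguments. Unset Strict Implicit. Unset Printing Implicit Defensive.
Import Order.TTheory GRing.Theory Num.Theory.
Local Open Scope classical_set_scope.
Local Open Scope ring_scope.

Section Defs.
Variable R : realType.

Definition trajectory_set (s0 : R) (T : set (nat -> R)) : Prop :=
  forall S, T S -> S 0%N = s0.

Record portfolio := Portfolio {
  pV : R;
  pn : nat;
  pH : nat -> (nat -> R) -> R }.

(* (V,n,H) is a simple portfolio on T: n in N = {1,2,...} and each H_i
   (i <= n-1) is nonanticipating on T, i.e. H_i(S) only depends on S_0..S_i
   (equivalently H_i(S) = h_i(S_0,...,S_i) for some function h_i). *)
Definition simple_portfolio (T : set (nat -> R)) (P : portfolio) : Prop :=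
  (0 < pn P)%N /\
  forall i, (i < pn P)%N -> forall S S', T S -> T S' ->
    (forall k, (k <= i)%N -> S k = S' k) -> pH P i S = pH P i S'.

Definition wealth (P : portfolio) (j : nat) (S : nat -> R) : R :=
  pV P + \sum_(0 <= i < minn j (pn P)) pH P i S * (S i.+1 - S i).

Definition wealth_inf (P : portfolio) (S : nat -> R) : R := wealth P (pn P) S.

Definition positive_portfolio (T : set (nat -> R)) (P : portfolio) : Prop :=
  0 <= pV P /\ forall S, T S -> 0 <= wealth_inf P S.

Definition generalized_portfolio (T : set (nat -> R)) (Ps : nat -> portfolio) : Prop :=
  (forall m, simple_portfolio T (Ps m)) /\
  (forall m, (1 <= m)%N -> positive_portfolio T (Ps m)).

Definition positive_generalized_portfolio (T : set (nat -> R))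
    (Ps : nat -> portfolio) : Prop :=
  generalized_portfolio T Ps /\
  (forall j S, T S -> wealth (Ps 0%N) j S = 0).

Definition superhedges (T : set (nat -> R)) (Ps : nat -> portfolio)
    (f : (nat -> R) -> \bar R) (V : \bar R) : Prop :=
  (forall S, T S -> (f S <= \sum_(0 <= m <oo) (wealth_inf (Ps m) S)%:E)%E) /\
  V = (\sum_(0 <= m <oo) (pV (Ps m))%:E)%E.

Definition Ibar (T : set (nat -> R)) (f : (nat -> R) -> \bar R) : \bar R :=
  ereal_inf [set V | exists Ps, positive_generalized_portfolio T Ps /\
                                superhedges T Ps f V].

Definition sigmabar (T : set (nat -> R)) (f : (nat -> R) -> \bar R) : \bar R :=
  ereal_inf [set V | exists Ps, generalized_portfolio T Ps /\
                                superhedges T Ps f V].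

Definition replicates (T : set (nat -> R)) (P : portfolio) (f : (nat -> R) -> R) : Prop :=
  forall S, T S -> f S = wealth_inf P S.

Definition in_E (T : set (nat -> R)) (f : (nat -> R) -> R) : Prop :=
  exists P, simple_portfolio T P /\ replicates T P f.

Definition in_Eplus (T : set (nat -> R)) (f : (nat -> R) -> R) : Prop :=
  in_E T f /\ forall S, T S -> 0 <= f S.

Definition LOP (T : set (nat -> R)) : Prop :=
  forall P0 P1, simple_portfolio T P0 -> simple_portfolio T P1 ->
    (forall S, T S -> wealth_inf P1 S = wealth_inf P0 S) -> pV P1 = pV P0.

(* Hedging price functional I(f) = V for f = Pi_inf^{V,n,H} (a chosen
   representative; well defined under (LOP)). *)
Definition hedging_price (T : set (nat -> R)) (f : (nat -> R) -> R) : R :=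
  xget 0 [set v : R | exists P, simple_portfolio T P /\ replicates T P f /\ pV P = v].

End Defs.

From HB Require Import structures.
From mathcomp Require Import all_boot all_order all_algebra.
From mathcomp Require Import all_classical all_reals all_analysis.
Set Implicit Arguments. Unset Strict Implicit. Unset Printing Implicit Defensive.
Import Order.TTheory GRing.Theory Num.Theory.
Local Open Scope classical_set_scope.
Local Open Scope ring_scope.

(* If sigmabar(0) >= 0, then whenever a simple portfolio P is dominated by a
   generalized portfolio Ps with endowment V, replacing the head Ps_0 of Ps by
   Ps_0 - P superhedges 0 with endowment V - V_P, so V_P <= V.  This one
   inequality gives (LOP), positivity of I, I(f) <= Ibar(f^+), and the lower
   bounds sigmabar(f), Ibar(f) >= I(f); the upper bounds come from holding the
   replicating portfolio alone.  Conversely, a generalized portfolio with head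
   A superhedging 0 yields, after dropping A, a positive one superhedging the
   positive part of -Pi(A) at cost V - V_A, which I(-Pi(A)) = -V_A bounds
   from below. *)

Lemma eseries_recl (R : realType) (u : nat -> \bar R) :
  u 0%N \is a fin_num -> (forall m, (0 <= u m.+1)%E) ->
  (\sum_(0 <= m <oo) u m = u 0%N + \sum_(0 <= m <oo) u m.+1)%E.
Proof.
move=> u0 u_ge0; apply: cvg_lim => //; rewrite -cvg_shiftS /=.
under eq_fun do rewrite big_nat_recl //.
apply: cvgeD; [exact: fin_num_adde_defr | exact: cvg_cst |].
exact: is_cvg_ereal_nneg_natsum.
Qed.

Lemma EFin_add_shift (R : numDomainType) (a b : R) (y : \bar R) :
  (a%:E + y + (b - a)%:E = b%:E + y)%E.
Proof. by rewrite addeAC -EFinD subrKC. Qed.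

Section Portfolios.
Context {R : realType} (T : set (nat -> R)).

Definition zeroP : portfolio R := Portfolio 0 1 (fun _ _ => 0).

Lemma wealth_zeroP j S : wealth zeroP j S = 0.
Proof. by rewrite /wealth big1 ?addr0 // => i _; rewrite mul0r. Qed.

Lemma simple_zeroP : simple_portfolio T zeroP.
Proof. by []. Qed.

Lemma positive_zeroP : positive_portfolio T zeroP.
Proof. by split => // S _; rewrite /wealth_inf wealth_zeroP. Qed.

Definition subP (A B : portfolio R) : portfolio R :=
  Portfolio (pV A - pV B) (maxn (pn A) (pn B))
    (fun i S => (if (i < pn A)%N then pH A i S else 0) -
                (if (i < pn B)%N then pH B i S else 0)).

Lemma sum_trunc (a N : nat) (x d : nat -> R) : (a <= N)%N ->
  \sum_(0 <= i < N) (if (i < a)%N then x i else 0) * d i =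
  \sum_(0 <= i < a) x i * d i.
Proof.
move=> aN; rewrite (big_cat_nat (leq0n a) aN) /=.
rewrite [X in _ + X]big_nat_cond [X in _ + X]big1 ?addr0.
  by apply: eq_big_nat => i /andP[_ ->].
by move=> i /andP[/andP[ai _] _]; rewrite ltnNge ai mul0r.
Qed.

Lemma wealth_inf_subP A B S :
  wealth_inf (subP A B) S = wealth_inf A S - wealth_inf B S.
Proof.
rewrite /wealth_inf /wealth /= !minnn.
under eq_bigr do rewrite mulrBl.
by rewrite sumrB !sum_trunc ?leq_maxl ?leq_maxr // opprD addrACA.
Qed.

Lemma simple_subP A B : simple_portfolio T A -> simple_portfolio T B ->
  simple_portfolio T (subP A B).
Proof.
move=> [A0 HA] [_ HB]; split; first by rewrite (leq_trans A0) ?leq_maxl.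
move=> i _ S S' TS TS' eqS /=.
by case: ifP => iA; case: ifP => iB; rewrite ?(HA i iA S S') ?(HB i iB S S').
Qed.

Definition positive_family (Qs : nat -> portfolio R) : Prop :=
  forall m, simple_portfolio T (Qs m) /\ positive_portfolio T (Qs m).

Definition consP (A : portfolio R) (Qs : nat -> portfolio R) : nat -> portfolio R :=
  fun m => if m is k.+1 then Qs k else A.

Definition oneP (A : portfolio R) : nat -> portfolio R := consP A (fun _ => zeroP).

Lemma positive_family_zeroP : positive_family (fun _ => zeroP).
Proof. by move=> _; split; [exact: simple_zeroP | exact: positive_zeroP]. Qed.

Lemma positive_family_consP A Qs :
  simple_portfolio T A -> positive_portfolio T A -> positive_family Qs ->
  positive_family (consP A Qs).
Proof. by move=> sA pA pQs [|m] //=; exact: pQs. Qed.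

Lemma generalized_consP A Qs : simple_portfolio T A -> positive_family Qs ->
  generalized_portfolio T (consP A Qs).
Proof. by move=> sA pQs; split=> [[|m] | [|m] _] //=; case: (pQs m). Qed.

Lemma generalized_oneP A : simple_portfolio T A -> generalized_portfolio T (oneP A).
Proof. by move=> sA; apply: generalized_consP sA positive_family_zeroP. Qed.

Lemma generalized_portfolio_consP Ps : generalized_portfolio T Ps ->
  exists A Qs, [/\ Ps = consP A Qs, simple_portfolio T A & positive_family Qs].
Proof.
move=> [sPs pPs]; exists (Ps 0%N), (fun m => Ps m.+1); split => //.
  by apply/funext => -[].
by move=> m; split; [exact: sPs | exact: pPs].
Qed.

Lemma positive_generalized_consP0 Qs : positive_family Qs ->
  positive_generalized_portfolio T (consP zeroP Qs).
Proof.
move=> pQs; split; first exact: generalized_consP simple_zeroP pQs.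
by move=> j S _; exact: wealth_zeroP.
Qed.

Lemma eseries_consP (u : portfolio R -> R) A Qs : (forall m, 0 <= u (Qs m)) ->
  (\sum_(0 <= m <oo) (u (consP A Qs m))%:E =
   (u A)%:E + \sum_(0 <= m <oo) (u (Qs m))%:E)%E.
Proof. by move=> u_ge0; rewrite eseries_recl // => m; rewrite lee_fin. Qed.

Lemma superhedges_le Ps (f g : (nat -> R) -> \bar R) V :
  (forall S, T S -> (f S <= g S)%E) -> superhedges T Ps g V -> superhedges T Ps f V.
Proof. by move=> fg [sh eV]; split=> // S TS; exact: le_trans (fg S TS) (sh S TS). Qed.

Lemma superhedges_oneP A :
  superhedges T (oneP A) (fun S => (wealth_inf A S)%:E) (pV A)%:E.
Proof.
have zero_tail (u : portfolio R -> R) : u zeroP = 0 ->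
    (\sum_(0 <= m <oo) (u (oneP A m))%:E = (u A)%:E)%E.
  move=> u0; rewrite (eseries_consP (u := u)); last by move=> _; rewrite u0.
  by rewrite eseries0 ?adde0 // => m _ _; rewrite u0.
split; last by rewrite (zero_tail (@pV R)).
move=> S _; rewrite (zero_tail (fun P => wealth_inf P S)) //.
by rewrite /wealth_inf wealth_zeroP.
Qed.

Lemma superhedges_consP0 Qs g V : positive_family Qs ->
  superhedges T Qs g V -> superhedges T (consP zeroP Qs) g V.
Proof.
move=> pQs [sh ->]; split; last first.
  by rewrite (eseries_consP (u := @pV R)) ?add0e // => m; case: (pQs m) => _ [].
move=> S TS; rewrite (eseries_consP (u := fun P => wealth_inf P S)); last first.
  by move=> m; case: (pQs m) => _ [_]; apply.
by rewrite /wealth_inf wealth_zeroP add0e; exact: sh.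
Qed.

Lemma superhedges_consP A B Qs g V : positive_family Qs ->
  superhedges T (consP A Qs) g V ->
  superhedges T (consP B Qs)
    (fun S => g S + (wealth_inf B S - wealth_inf A S)%:E)%E
    (V + (pV B - pV A)%:E)%E.
Proof.
move=> pQs [sh ->]; split.
  move=> S TS; have wQs_ge0 m : 0 <= wealth_inf (Qs m) S.
    by case: (pQs m) => _ [_]; apply.
  move: (sh S TS); rewrite !(eseries_consP (u := fun P => wealth_inf P S)) //.
  by move=> h; rewrite -(EFin_add_shift (wealth_inf A S) (wealth_inf B S)); exact: leeD2r.
have pVQs_ge0 m : 0 <= pV (Qs m) by case: (pQs m) => _ [].
by rewrite (eseries_consP A pVQs_ge0) (eseries_consP B pVQs_ge0) EFin_add_shift.
Qed.

Lemma superhedges_max0 Ps f V : positive_generalized_portfolio T Ps ->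
  superhedges T Ps f V -> superhedges T Ps (fun S => Order.max (f S) 0%E) V.
Proof.
move=> [[_ pPs] w0] [sh eV]; split => // S TS; rewrite ge_max sh //=.
apply: nneseries_ge0 => -[_ _|m _ _]; first by rewrite /wealth_inf w0.
by case: (pPs m.+1 isT) => _ /(_ S TS); rewrite lee_fin.
Qed.

Lemma sigmabar_le Ps f V : generalized_portfolio T Ps ->
  superhedges T Ps f V -> (sigmabar T f <= V)%E.
Proof. by move=> gPs sh; apply: ereal_inf_lbound; exists Ps. Qed.

Lemma Ibar_le Ps f V : positive_generalized_portfolio T Ps ->
  superhedges T Ps f V -> (Ibar T f <= V)%E.
Proof. by move=> pPs sh; apply: ereal_inf_lbound; exists Ps. Qed.

Lemma sigmabar_le_Ibar f : (sigmabar T f <= Ibar T f)%E.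
Proof. by apply: le_ereal_inf => V [Ps [[gPs _] sh]]; exists Ps. Qed.

Lemma hedging_priceP f : in_E T f ->
  exists P, [/\ simple_portfolio T P, replicates T P f & pV P = hedging_price T f].
Proof.
move=> [P [sP rP]].
have [|P' [sP' [rP' eP']]] := @xgetPex _ 0
  [set v : R | exists P, simple_portfolio T P /\ replicates T P f /\ pV P = v].
  by exists (pV P), P.
by exists P'.
Qed.

Lemma hedging_price_LOP f P : LOP T ->
  simple_portfolio T P -> replicates T P f -> hedging_price T f = pV P.
Proof.
move=> lop sP rP; have [|P' [sP' rP' <-]] := @hedging_priceP f; first by exists P.
by apply: lop => // S TS; rewrite -rP -?rP'.
Qed.

End Portfolios.

Section NoArbitrage.
Context {R : realType} (T : set (nat -> R)).
Hypothesis sigmabar0_ge0 : (0 <= sigmabar T (fun _ => 0))%E.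

Lemma superhedging_price_ge P Ps g V :
  simple_portfolio T P -> generalized_portfolio T Ps -> superhedges T Ps g V ->
  (forall S, T S -> ((wealth_inf P S)%:E <= g S)%E) -> ((pV P)%:E <= V)%E.
Proof.
move=> sP /generalized_portfolio_consP[A [Qs [-> sA pQs]]] sh Pg.
have := superhedges_consP (subP A P) pQs sh.
rewrite /= addrAC subrr add0r => shB.
have : (sigmabar T (fun _ => 0) <= V + (- pV P)%:E)%E.
  apply: sigmabar_le (generalized_consP (simple_subP sA sP) pQs) _.
  apply: superhedges_le shB => S TS.
  by rewrite wealth_inf_subP addrAC subrr add0r EFinN leeBrDr // add0e Pg.
by move=> /(le_trans sigmabar0_ge0); rewrite EFinN leeBrDr // add0e.
Qed.

Lemma le_sigmabar P g : simple_portfolio T P ->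
  (forall S, T S -> ((wealth_inf P S)%:E <= g S)%E) -> ((pV P)%:E <= sigmabar T g)%E.
Proof.
move=> sP Pg; apply: le_ereal_inf_tmp => V [Ps [gPs sh]].
exact: superhedging_price_ge sP gPs sh Pg.
Qed.

Lemma sigmabar0_LOP : LOP T.
Proof.
have pV_le P0 P1 : simple_portfolio T P0 -> simple_portfolio T P1 ->
    (forall S, T S -> wealth_inf P1 S = wealth_inf P0 S) -> pV P1 <= pV P0.
  move=> sP0 sP1 eqw; rewrite -lee_fin.
  apply: le_trans (le_sigmabar sP1 _)
    (sigmabar_le (generalized_oneP sP0) (superhedges_oneP T P0)).
  by move=> S TS; rewrite eqw.
move=> P0 P1 sP0 sP1 eqw; apply/le_anti/andP.
by split; apply: pV_le => // S TS; rewrite eqw.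
Qed.

Lemma hedging_price_ge0 f : in_Eplus T f -> 0 <= hedging_price T f.
Proof.
move=> [/hedging_priceP[P [sP rP <-]] f_ge0]; rewrite -lee_fin.
apply: le_trans sigmabar0_ge0 (sigmabar_le (generalized_oneP sP) _).
apply: superhedges_le (superhedges_oneP T P) => S TS.
by rewrite -rP // lee_fin f_ge0.
Qed.

Lemma hedging_price_le_Ibar f : in_E T f ->
  ((hedging_price T f)%:E <= Ibar T (fun S => (Num.max (f S) 0)%:E))%E.
Proof.
move=> /hedging_priceP[P [sP rP <-]]; apply: le_trans (sigmabar_le_Ibar _ _).
by apply: le_sigmabar sP _ => S TS; rewrite -rP // lee_fin le_max lexx.
Qed.

Lemma sigmabar_hedging_price f : in_E T f ->
  sigmabar T (fun S => (f S)%:E) = (hedging_price T f)%:E.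
Proof.
move=> /hedging_priceP[P [sP rP <-]]; apply/le_anti/andP; split.
  apply: sigmabar_le (generalized_oneP sP) _.
  by apply: superhedges_le (superhedges_oneP T P) => S TS; rewrite rP.
by apply: le_sigmabar sP _ => S TS; rewrite rP.
Qed.

Lemma Ibar_hedging_price f : in_Eplus T f ->
  Ibar T (fun S => (f S)%:E) = (hedging_price T f)%:E.
Proof.
move=> [fE f_ge0]; apply/le_anti/andP; split; last first.
  by rewrite -sigmabar_hedging_price // sigmabar_le_Ibar.
have := hedging_price_ge0 (conj fE f_ge0).
have [P [sP rP <-] pV_ge0] := hedging_priceP fE.
have pP : positive_portfolio T P by split=> // S TS; rewrite -rP // f_ge0.
have pQs := positive_family_consP sP pP (positive_family_zeroP T).
apply: Ibar_le (positive_generalized_consP0 pQs) (superhedges_consP0 pQs _).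
by apply: superhedges_le (superhedges_oneP T P) => S TS; rewrite rP.
Qed.

End NoArbitrage.

Lemma sigmabar0_ge0 (R : realType) (T : set (nat -> R)) : LOP T ->
  (forall f, in_E T f ->
     ((hedging_price T f)%:E <= Ibar T (fun S => (Num.max (f S) 0)%:E))%E) ->
  (0 <= sigmabar T (fun _ => 0))%E.
Proof.
move=> lop priceI; apply: le_ereal_inf_tmp => V [Ps [gPs sh]].
have [A [Qs [ePs sA pQs]]] := generalized_portfolio_consP gPs.
rewrite {Ps gPs}ePs in sh.
have sNA : simple_portfolio T (subP zeroP A) := simple_subP (simple_zeroP T) sA.
have pQs0 := positive_generalized_consP0 pQs.
have shNA : superhedges T (consP zeroP Qs)
    (fun S => (Num.max (wealth_inf (subP zeroP A) S) 0)%:E) (V + (- pV A)%:E).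
  rewrite -[- pV A]sub0r.
  apply: superhedges_le (superhedges_max0 pQs0 (superhedges_consP zeroP pQs sh)).
  by move=> S _; rewrite wealth_inf_subP /wealth_inf wealth_zeroP add0e EFin_max.
have NAE : in_E T (wealth_inf (subP zeroP A)) by exists (subP zeroP A).
have := le_trans (priceI _ NAE) (Ibar_le pQs0 shNA).
rewrite (hedging_price_LOP lop sNA (fun _ _ => erefl)) /= sub0r.
by rewrite -[X in (X%:E <= _)%E]add0r EFinD leeD2rE.
Qed.

Theorem proposition3p3 (R : realType) (s0 : R) (T : set (nat -> R))
  (HT : trajectory_set s0 T) :
  let cond1 := (0 <= sigmabar T (fun _ => 0%E))%E in
  let cond2 :=
    [/\ LOP T,
        (forall f, in_Eplus T f -> 0 <= hedging_price T f) &
        (forall f, in_E T f ->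
           ((hedging_price T f)%:E <= Ibar T (fun S => (Num.max (f S) 0)%:E))%E)] in
  (cond1 <-> cond2) /\
  (cond1 ->
     (forall f, in_E T f -> sigmabar T (fun S => (f S)%:E) = (hedging_price T f)%:E) /\
     (forall f, in_Eplus T f -> Ibar T (fun S => (f S)%:E) = (hedging_price T f)%:E)).
Proof.
move=> cond1 cond2; split.
  split => [h1 | [lop _ priceI]]; last exact: sigmabar0_ge0 lop priceI.
  split; [exact: sigmabar0_LOP | exact: hedging_price_ge0 | exact: hedging_price_le_Ibar].
move=> h1; split; [exact: sigmabar_hedging_price | exact: Ibar_hedging_price].
Qed.
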